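(* Let $(\underline{\mathbf{V}},\underline{\mathbf{P}})$ be a subsolution and $(\overline{\mathbf{V}},\overline{\mathbf{P}})$ a supersolution of the asymptotic system described in the context, both locally bounded in time, with $\underline{V}_j(0)\le\overline{V}_j(0)$ and $\underline{P}_j(0)\le\overline{P}_j(0)$ for all $j\in\mathbb{Z}$. Then $\underline{V}_j(t)\le\overline{V}_j(t)$ and $\underline{P}_j(t)\le\overline{P}_j(t)$ for all $t>0$, $j\in\mathbb{Z}$. If moreover $(\underline{\mathbf{V}}(0),\underline{\mathbf{P}}(0))\not\equiv(\overline{\mathbf{V}}(0),\overline{\mathbf{P}}(0))$, then $\underline{V}_j(t)<\overline{V}_j(t)$ and $\underline{P}_j(t)<\overline{P}_j(t)$ for all $t>0$, $j\in\mathbb{Z}$.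
   Context: Fix $\alpha,\beta>0$ and $f\in\mathscr{C}^1([0,1])$ with $f(0)=f(1)=0$, $0<f(u)\le f'(0)u$ on $(0,1)$, extended to a locally Lipschitz function on $\mathbb{R}$ negative on $\mathbb{R}\setminus[0,1]$. The asymptotic system is $V_j'=-2\alpha V_j+\beta(P_j+P_{j+1})$, $P_j'=f(P_j)+\alpha(V_j+V_{j-1})-2\beta P_j$ ($t>0$, $j\in\mathbb{Z}$). A supersolution is $(\overline{\mathbf{V}},\overline{\mathbf{P}})$ with $\overline{V}_j,\overline{P}_j\in\mathscr{C}^1([0,+\infty),\mathbb{R})$ such that for all $t>0$, $j$: $\overline{V}_j'\ge-2\alpha\overline{V}_j+\beta(\overline{P}_j+\overline{P}_{j+1})$ and $\overline{P}_j'\ge f(\overline{P}_j)+\alpha(\overline{V}_j+\overline{V}_{j-1})-2\beta\overline{P}_j$; a subsolution has both inequalities reversed. Locally bounded in time: $\sup_{t\in[0,T],j\in\mathbb{Z}}(|V_j(t)|+|P_j(t)|)<\infty$ for every $T>0$. *)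

From Stdlib Require Import Reals ZArith.
From Coquelicot Require Import Coquelicot.
Open Scope R_scope.

(* In particular f'(0) = df 0. *)
Definition C1_on_01 (f df : R -> R) : Prop :=
  (forall u, 0 <= u <= 1 ->
     filterlim (fun v => (f v - f u) / (v - u))
       (within (fun v => 0 <= v <= 1 /\ v <> u) (locally u)) (locally (df u))) /\
  (forall u, 0 <= u <= 1 ->
     filterlim df (within (fun v => 0 <= v <= 1) (locally u)) (locally (df u))).

Definition locally_lipschitz (f : R -> R) : Prop :=
  forall x : R, exists delta L : R, 0 < delta /\
    forall y z : R, Rabs (y - x) < delta -> Rabs (z - x) < delta ->
      Rabs (f y - f z) <= L * Rabs (y - z).

Definition admissible_f (f df : R -> R) : Prop :=
  C1_on_01 f df /\ f 0 = 0 /\ f 1 = 0 /\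
  (forall u, 0 < u < 1 -> 0 < f u /\ f u <= df 0 * u) /\
  locally_lipschitz f /\
  (forall u, (u < 0 \/ 1 < u) -> f u < 0).

Definition C1_nonneg (g : R -> R) : Prop :=
  exists dg : R -> R,
    (forall t, 0 < t -> is_derive g t (dg t)) /\
    filterlim (fun h => (g h - g 0) / h) (at_right 0) (locally (dg 0)) /\
    (forall t, 0 <= t ->
       filterlim dg (within (fun s => 0 <= s) (locally t)) (locally (dg t))).

Definition supersolution (f : R -> R) (alpha beta : R)
    (V P : Z -> R -> R) : Prop :=
  (forall j, C1_nonneg (V j) /\ C1_nonneg (P j)) /\
  forall (t : R) (j : Z), 0 < t ->
    Derive (V j) t >= - 2 * alpha * V j t + beta * (P j t + P (j + 1)%Z t) /\
    Derive (P j) t >= f (P j t) + alpha * (V j t + V (j - 1)%Z t) - 2 * beta * P j t.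

Definition subsolution (f : R -> R) (alpha beta : R)
    (V P : Z -> R -> R) : Prop :=
  (forall j, C1_nonneg (V j) /\ C1_nonneg (P j)) /\
  forall (t : R) (j : Z), 0 < t ->
    Derive (V j) t <= - 2 * alpha * V j t + beta * (P j t + P (j + 1)%Z t) /\
    Derive (P j) t <= f (P j t) + alpha * (V j t + V (j - 1)%Z t) - 2 * beta * P j t.

Definition locally_bounded (V P : Z -> R -> R) : Prop :=
  forall T : R, 0 < T -> exists M : R,
    forall (t : R) (j : Z), 0 <= t <= T -> Rabs (V j t) + Rabs (P j t) <= M.

From Stdlib Require Import Reals ZArith Lra Lia Classical.
From Coquelicot Require Import Coquelicot.
Open Scope R_scope.

(* Put [b_j = Pu_j - Pl_j] at the even sites and [a_j = Vu_j - Vl_j] at the odd sites of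
   one chain [u].  Subtracting the two systems, and bounding [f (Pu_j) - f (Pl_j)] by a
   Lipschitz constant of [f] on the range of the solutions, gives a cooperative inequality
   [u_p' >= - K |u_p| + w_p (u_(p-1) + u_(p+1))] with weights [w_p > 0].
   For such a chain, let [mu] be the largest negative part of [u] on a short window
   [t0, t0 + tau] starting from nonnegative data: the mean value theorem applied to
   [exp (K t) u_p (t)] gives [mu <= mu / 2], so [u] stays nonnegative, step by step.
   Once [u >= 0], [exp (K t) u_p (t)] is nondecreasing and increases strictly while a
   neighbour is positive, so positivity at one site reaches every site at every [t > 0]. *)

Definition lipschitz_on (f : R -> R) (a b L : R) : Prop :=
  forall y z, a <= y <= b -> a <= z <= b -> Rabs (f y - f z) <= L * Rabs (y - z).

Lemma lipschitz_on_subinterval f a b a' b' L :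
  a <= a' -> b' <= b -> lipschitz_on f a b L -> lipschitz_on f a' b' L.
Proof. intros Ha Hb HL y z Hy Hz. apply HL; lra. Qed.

Lemma lipschitz_on_glue f a c x d L0 L1 :
  0 <= L0 -> 0 <= L1 -> a <= x -> c <= x <= d ->
  lipschitz_on f a x L0 -> lipschitz_on f c d L1 -> lipschitz_on f a d (L0 + L1).
Proof.
  intros HL0 HL1 Hax Hcxd Hl0 Hl1.
  assert (Across : forall y z, a <= y <= x -> x <= z <= d ->
            Rabs (f y - f z) <= (L0 + L1) * Rabs (y - z)).
  { intros y z Hy Hz.
    assert (A0 := Hl0 y x Hy ltac:(lra)). assert (A1 := Hl1 x z ltac:(lra) ltac:(lra)).
    rewrite (Rabs_left1 (y - x)) in A0 by lra. rewrite (Rabs_left1 (x - z)) in A1 by lra.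
    rewrite (Rabs_left1 (y - z)) by lra.
    replace (f y - f z) with ((f y - f x) + (f x - f z)) by ring.
    eapply Rle_trans; [apply Rabs_triang |]. nra. }
  intros y z Hy Hz.
  assert (Habs := Rabs_pos (y - z)).
  destruct (Rle_lt_dec y x), (Rle_lt_dec z x).
  - eapply Rle_trans; [apply Hl0; lra | nra].
  - apply Across; lra.
  - rewrite Rabs_minus_sym, (Rabs_minus_sym y). apply Across; lra.
  - eapply Rle_trans; [apply Hl1; lra | nra].
Qed.

Lemma locally_lipschitz_on_ball f x : locally_lipschitz f ->
  exists d L, 0 < d /\ 0 <= L /\ lipschitz_on f (x - d) (x + d) L.
Proof.
  intros Hf. destruct (Hf x) as [d [L [Hd HL]]].
  exists (d / 2), (Rmax L 0). repeat split; [lra | apply Rmax_r |].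
  intros y z Hy Hz. eapply Rle_trans.
  - apply HL; apply Rabs_def1; lra.
  - apply Rmult_le_compat_r; [apply Rabs_pos | apply Rmax_l].
Qed.

Lemma locally_lipschitz_on_segment f a b : locally_lipschitz f -> a <= b ->
  exists L, 0 <= L /\ lipschitz_on f a b L.
Proof.
  intros Hf Hab.
  set (E := fun x => a <= x <= b /\ exists L, 0 <= L /\ lipschitz_on f a x L).
  assert (Ea : E a).
  { split; [lra |]. exists 0. split; [lra |]. intros y z Hy Hz.
    replace y with a by lra. replace z with a by lra.
    rewrite Rminus_diag, Rabs_R0. lra. }
  destruct (completeness E) as [s [Hub Hlub]].
  { exists b. now intros x [Hx _]. }
  { now exists a. }
  assert (Hs : a <= s <= b) by (split; [now apply Hub | apply Hlub; now intros x [Hx _]]).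
  destruct (locally_lipschitz_on_ball f s Hf) as [d [L1 [Hd [HL1 Hl1]]]].
  assert (Hx : exists x, E x /\ s - d < x).
  { apply NNPP. intro Hn. assert (s <= s - d); [| lra].
    apply Hlub. intros x Ex. apply Rnot_lt_le. intro Hlt. apply Hn. now exists x. }
  destruct Hx as [x [[Hx [L0 [HL0 Hl0]]] Hxd]].
  assert (Hxs : x <= s) by (apply Hub; split; [exact Hx | now exists L0]).
  set (x1 := Rmin (s + d) b).
  assert (Ex1 : E x1).
  { assert (Rmin (s + d) b <= s + d) by apply Rmin_l.
    split; [split; [apply Rmin_glb; lra | apply Rmin_r] |].
    exists (L0 + L1). split; [lra |].
    apply (lipschitz_on_glue f a (s - d) x x1 L0 L1); try lra.
    - split; [lra | unfold x1; apply Rmin_glb; lra].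
    - exact Hl0.
    - eapply lipschitz_on_subinterval; [| | exact Hl1]; unfold x1; lra. }
  assert (Hx1 : x1 = b).
  { assert (x1 <= s) by (now apply Hub). unfold x1 in *.
    destruct (Rle_dec (s + d) b); [rewrite Rmin_left in *; lra | rewrite Rmin_right; lra]. }
  destruct Ex1 as [_ HLb]. now rewrite Hx1 in HLb.
Qed.

Lemma right_derivative_right_continuous (g : R -> R) (d : R) :
  filterlim (fun h => (g h - g 0) / h) (at_right 0) (locally d) ->
  filterlim g (at_right 0) (locally (g 0)).
Proof.
  intros Hq.
  apply filterlim_ext_loc with (fun h => g 0 + h * ((g h - g 0) / h)).
  { exists (mkposreal 1 Rlt_0_1). intros h _ Hh. field. lra. }
  assert (Hlim : filterlim (fun h => g 0 + h * ((g h - g 0) / h)) (at_right 0)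
                   (locally (g 0 + 0 * d))).
  { eapply filterlim_comp_2;
      [apply filterlim_const | | apply (filterlim_plus (V := R_NormedModule))].
    eapply filterlim_comp_2; [| exact Hq | apply (filterlim_mult (K := R_AbsRing))].
    apply (filterlim_filter_le_1 (F := locally 0)); [apply filter_le_within | apply filterlim_id]. }
  now rewrite Rmult_0_l, Rplus_0_r in Hlim.
Qed.

Lemma continuity_pt_Rmax0 (g : R -> R) :
  filterlim g (at_right 0) (locally (g 0)) ->
  continuity_pt (fun t => g (Rmax 0 t)) 0.
Proof.
  intros Hg. apply continuity_pt_filterlim, filterlim_locally. intros eps.
  destruct (proj1 (filterlim_locally _ _) Hg eps) as [d Hd].
  exists d. intros y Hy. rewrite (Rmax_left 0 0) by lra.
  destruct (Rle_lt_dec y 0) as [Hy0 | Hy0].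
  - rewrite Rmax_left by lra. apply ball_center.
  - rewrite Rmax_right by lra. now apply Hd.
Qed.

Lemma filterlim_Rminus {T : Type} (F : (T -> Prop) -> Prop) {FF : Filter F}
    (g h : T -> R) (lg lh : R) :
  filterlim g F (locally lg) -> filterlim h F (locally lh) ->
  filterlim (fun t => g t - h t) F (locally (lg - lh)).
Proof.
  intros Hg Hh.
  apply (filterlim_comp_2 (G := locally lg) (H := locally (- lh)) g (fun t => - h t) Rplus);
    [exact Hg | | apply (filterlim_plus (V := R_NormedModule))].
  eapply filterlim_comp; [exact Hh | apply (filterlim_opp (V := R_NormedModule))].
Qed.

Lemma mvt_open (h dh : R -> R) (a b : R) :
  a < b ->
  (forall x, a < x < b -> is_derive h x (dh x)) ->
  (forall x, a <= x <= b -> continuity_pt h x) ->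
  exists c, a < c < b /\ h b - h a = (b - a) * dh c.
Proof.
  intros Hab Hd Hc.
  assert (pr1 : forall c, a < c < b -> derivable_pt h c).
  { intros c Hc'. exists (dh c). apply is_derive_Reals. now apply Hd. }
  assert (pr2 : forall c, a < c < b -> derivable_pt id c).
  { intros c _. apply derivable_pt_id. }
  destruct (MVT h id a b pr1 pr2 Hab Hc) as [c [P E]].
  { intros c _. apply derivable_continuous_pt, derivable_pt_id. }
  exists c; split; [exact P|].
  rewrite (derive_pt_eq_0 h c (dh c) (pr1 c P)) in E.
  2: { apply is_derive_Reals. now apply Hd. }
  rewrite (derive_pt_eq_0 id c 1 (pr2 c P)) in E.
  2: { apply derivable_pt_lim_id. }
  unfold id in E. lra.
Qed.

Lemma exp_le_exp x y : x <= y -> exp x <= exp y.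
Proof. intros [Hlt | ->]; [now apply Rlt_le, exp_increasing | apply Rle_refl]. Qed.

Lemma exp_weighted_mvt (g : R -> R) (k t0 s : R) :
  0 <= t0 < s ->
  (forall x, 0 < x -> ex_derive g x) ->
  filterlim g (at_right 0) (locally (g 0)) ->
  exists xi, t0 < xi < s /\
    exp (k * s) * g s - exp (k * t0) * g t0
    = (s - t0) * (exp (k * xi) * (k * g xi + Derive g xi)).
Proof.
  intros Hts Hg Hg0.
  (* Freezing [g] at [g 0] for [t < 0] makes [h] continuous on the closed interval. *)
  set (h := fun t => exp (k * t) * g (Rmax 0 t)).
  assert (Hh : forall x, 0 < x -> is_derive h x (exp (k * x) * (k * g x + Derive g x))).
  { intros x Hx.
    apply is_derive_ext_loc with (fun t => exp (k * t) * g t).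
    - exists (mkposreal x Hx). intros y Hy.
      change (Rabs (y - x) < x) in Hy. apply Rabs_def2 in Hy.
      unfold h. now rewrite Rmax_right by lra.
    - auto_derive; [exact (Hg x Hx) |].
      change (Derive (fun y => g y) x) with (Derive g x). ring. }
  destruct (mvt_open h (fun x => exp (k * x) * (k * g x + Derive g x)) t0 s)
    as [xi [Hxi E]].
  - lra.
  - intros x Hx. apply Hh. lra.
  - intros x Hx. destruct (Req_dec x 0) as [-> | Hx0].
    + apply continuity_pt_mult; [| now apply continuity_pt_Rmax0].
      apply derivable_continuous_pt, derivable_pt_comp;
        [apply derivable_pt_scal, derivable_pt_id | apply derivable_pt_exp].
    + apply continuity_pt_filterlim, (ex_derive_continuous (K := R_AbsRing) (V := R_NormedModule)).
      eexists. apply Hh. lra.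
  - exists xi. split; [exact Hxi |].
    unfold h in E. now rewrite (Rmax_right 0 s), (Rmax_right 0 t0) in E by lra.
Qed.

Definition lattice_supersolution (w : Z -> R) (u : Z -> R -> R) : Prop :=
  (forall p t, 0 < t -> ex_derive (u p) t) /\
  (forall p, filterlim (u p) (at_right 0) (locally (u p 0))) /\
  (forall T, 0 < T -> exists K, 0 <= K /\ forall p t, 0 < t <= T ->
     Derive (u p) t >= - K * Rabs (u p t) + w p * (u (p - 1)%Z t + u (p + 1)%Z t)) /\
  (forall T, 0 < T -> exists M, forall p t, 0 <= t <= T -> Rabs (u p t) <= M).

Section CooperativeLattice.

Variables (w : Z -> R) (W : R) (u : Z -> R -> R).
Hypothesis w_pos : forall p, 0 < w p.
Hypothesis w_le : forall p, w p <= W.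
Hypothesis u_derivable : forall p t, 0 < t -> ex_derive (u p) t.
Hypothesis u_right_continuous : forall p, filterlim (u p) (at_right 0) (locally (u p 0)).
Hypothesis u_ineq : forall T, 0 < T -> exists K, 0 <= K /\ forall p t, 0 < t <= T ->
  Derive (u p) t >= - K * Rabs (u p t) + w p * (u (p - 1)%Z t + u (p + 1)%Z t).
Hypothesis u_bounded : forall T, 0 < T -> exists M, forall p t, 0 <= t <= T -> Rabs (u p t) <= M.
Hypothesis u0_nonneg : forall p, 0 <= u p 0.

Section Horizon.

Variables (T K M : R).
Hypothesis K_nonneg : 0 <= K.
Hypothesis u_ineq_T : forall p t, 0 < t <= T ->
  Derive (u p) t >= - K * Rabs (u p t) + w p * (u (p - 1)%Z t + u (p + 1)%Z t).
Hypothesis u_bounded_T : forall p t, 0 <= t <= T -> Rabs (u p t) <= M.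

Let C := 2 * K + 2 * W.
Let tau := / (2 * C * exp (K * T)).

Let C_pos : 0 < C.
Proof. assert (H := w_pos 0). assert (H' := w_le 0). unfold C. lra. Qed.

Let tau_pos : 0 < tau.
Proof. unfold tau. assert (H := exp_pos (K * T)). apply Rinv_0_lt_compat. nra. Qed.

Lemma weighted_derivative_lower_bound p mu xi :
  0 <= mu -> 0 < xi <= T -> (forall q, u q xi >= - mu) ->
  K * u p xi + Derive (u p) xi >= - C * mu.
Proof.
  intros Hmu Hxi Hlow.
  assert (Hd := u_ineq_T p xi Hxi).
  assert (Hn : w p * (u (p - 1)%Z xi + u (p + 1)%Z xi) >= - (2 * W) * mu).
  { assert (Hw := w_pos p). assert (Hw' := w_le p).
    assert (H1 := Hlow (p - 1)%Z). assert (H2 := Hlow (p + 1)%Z). nra. }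
  assert (Hk : K * u p xi - K * Rabs (u p xi) >= - (2 * K) * mu).
  { assert (H := Hlow p). destruct (Rle_lt_dec 0 (u p xi)).
    - rewrite Rabs_pos_eq by lra. nra.
    - rewrite Rabs_left by lra. nra. }
  unfold C. lra.
Qed.

Lemma lower_bound_halves t0 t1 mu :
  0 <= t0 -> t1 <= T -> t1 - t0 <= tau -> 0 <= mu ->
  (forall q, 0 <= u q t0) -> (forall q s, t0 <= s <= t1 -> u q s >= - mu) ->
  forall p s, t0 <= s <= t1 -> u p s >= - mu / 2.
Proof.
  intros Ht0 Ht1 Htau Hmu Hinit Hlow p s Hs.
  destruct (Req_dec s t0) as [-> | Hst]; [specialize (Hinit p); lra |].
  destruct (exp_weighted_mvt (u p) K t0 s ltac:(lra) (u_derivable p) (u_right_continuous p))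
    as [xi [Hxi E]].
  assert (HD := weighted_derivative_lower_bound p mu xi Hmu ltac:(lra)
                  (fun q => Hlow q xi ltac:(lra))).
  assert (Hexi : 0 < exp (K * xi) <= exp (K * T)).
  { split; [apply exp_pos | apply exp_le_exp; nra]. }
  (* [tau] is chosen so that the weighted increment over the window is at most [mu / 2]. *)
  assert (Hincr : (s - t0) * (exp (K * xi) * C * mu) <= mu / 2).
  { replace (mu / 2) with (tau * (exp (K * T) * C * mu))
      by (unfold tau; field; split; [lra | generalize (exp_pos (K * T)); lra]).
    apply Rmult_le_compat; [lra | | lra |].
    - apply Rmult_le_pos; [apply Rmult_le_pos |]; lra.
    - apply Rmult_le_compat_r; [| apply Rmult_le_compat_r]; lra. }
  assert (Hes : 1 <= exp (K * s)) by (generalize (exp_ineq1_le (K * s)); nra).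
  assert (H0 := exp_pos (K * t0)). assert (H1 := Hinit p).
  assert (Hprod : (s - t0) * (exp (K * xi) * (K * u p xi + Derive (u p) xi))
                  >= - ((s - t0) * (exp (K * xi) * C * mu))).
  { assert (0 <= s - t0) by lra. apply Rle_ge.
    replace (- ((s - t0) * (exp (K * xi) * C * mu)))
      with ((s - t0) * (exp (K * xi) * (- C * mu))) by ring.
    apply Rmult_le_compat_l; [lra |]. apply Rmult_le_compat_l; lra. }
  assert (exp (K * s) * u p s >= - mu / 2) by nra.
  destruct (Rle_lt_dec 0 (u p s)); nra.
Qed.

Lemma nonneg_short_time t0 t1 :
  0 <= t0 <= t1 -> t1 <= T -> t1 - t0 <= tau -> (forall q, 0 <= u q t0) ->
  forall p, 0 <= u p t1.
Proof.
  intros Ht0 Ht1 Htau Hinit.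
  set (E := fun x => x = 0 \/ exists q s, t0 <= s <= t1 /\ x = - u q s).
  destruct (completeness E) as [mu [Hub Hlub]].
  { exists M. intros x [-> | [q [s [Hs ->]]]].
    - generalize (u_bounded_T 0%Z t0 ltac:(lra)) (Rabs_pos (u 0%Z t0)). lra.
    - generalize (u_bounded_T q s ltac:(lra)) (Rabs_pos (u q s)) (Rabs_maj2 (u q s)). lra. }
  { exists 0. now left. }
  assert (Hmu : 0 <= mu) by (apply Hub; now left).
  assert (Hlow : forall q s, t0 <= s <= t1 -> u q s >= - mu).
  { intros q s Hs. enough (- u q s <= mu) by lra. apply Hub. right. now exists q, s. }
  assert (Hhalf : mu <= mu / 2).
  { apply Hlub. intros x [-> | [q [s [Hs ->]]]]; [lra |].
    enough (u q s >= - mu / 2) by lra.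
    now apply (lower_bound_halves t0 t1 mu). }
  intros p. specialize (Hlow p t1 ltac:(lra)). lra.
Qed.

Lemma nonneg_up_to_horizon p t : 0 <= t <= T -> 0 <= u p t.
Proof.
  assert (Hsteps : forall n q s, 0 <= s <= T -> s <= INR n * tau -> 0 <= u q s).
  { induction n as [| n IH]; intros q s Hs Hsn.
    - simpl in Hsn. replace s with 0 by lra. apply u0_nonneg.
    - rewrite S_INR in Hsn. destruct (Rle_lt_dec s (INR n * tau)); [now apply IH |].
      assert (Hn := pos_INR n).
      apply (nonneg_short_time (INR n * tau)); try nra.
      intros q'. apply IH; nra. }
  intros Ht. destruct (INR_archimed tau T tau_pos) as [n Hn].
  apply (Hsteps n); lra.
Qed.

End Horizon.

Lemma lattice_nonneg p t : 0 <= t -> 0 <= u p t.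
Proof.
  intros Ht.
  destruct (u_ineq (t + 1) ltac:(lra)) as [K [HK Hineq]].
  destruct (u_bounded (t + 1) ltac:(lra)) as [M HM].
  apply (nonneg_up_to_horizon (t + 1) K M); auto; lra.
Qed.

Lemma positivity_propagates p t0 s :
  0 <= t0 < s ->
  (0 < u p t0 \/ forall xi, t0 < xi < s -> 0 < u (p - 1)%Z xi + u (p + 1)%Z xi) ->
  0 < u p s.
Proof.
  intros Hts Hpos.
  destruct (u_ineq s ltac:(lra)) as [K [HK Hineq]].
  destruct (exp_weighted_mvt (u p) K t0 s Hts (u_derivable p) (u_right_continuous p))
    as [xi [Hxi E]].
  assert (Hgrowth : K * u p xi + Derive (u p) xi >= w p * (u (p - 1)%Z xi + u (p + 1)%Z xi)).
  { assert (H := Hineq p xi ltac:(lra)).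
    rewrite Rabs_pos_eq in H by (apply lattice_nonneg; lra). lra. }
  assert (Hw := w_pos p).
  assert (Hn1 := lattice_nonneg (p - 1)%Z xi ltac:(lra)).
  assert (Hn2 := lattice_nonneg (p + 1)%Z xi ltac:(lra)).
  assert (Hn0 := lattice_nonneg p t0 ltac:(lra)).
  assert (He := exp_pos (K * xi)). assert (He0 := exp_pos (K * t0)).
  assert (Hes := exp_pos (K * s)).
  enough (0 < exp (K * s) * u p s) by nra.
  destruct Hpos as [Hp | Hnb].
  - assert (0 <= (s - t0) * (exp (K * xi) * (K * u p xi + Derive (u p) xi))); [| nra].
    apply Rmult_le_pos; [lra |]. apply Rmult_le_pos; nra.
  - assert (0 < (s - t0) * (exp (K * xi) * (K * u p xi + Derive (u p) xi))); [| nra].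
    specialize (Hnb xi Hxi).
    apply Rmult_lt_0_compat; [lra |]. apply Rmult_lt_0_compat; nra.
Qed.

Lemma lattice_pos : (exists p0, 0 < u p0 0) -> forall p t, 0 < t -> 0 < u p t.
Proof.
  intros [p0 Hp0].
  apply (Z.order_induction (fun p => forall t, 0 < t -> 0 < u p t)) with p0.
  - intros p q ->. reflexivity.
  - intros t Ht. apply (positivity_propagates p0 0 t); [lra | now left].
  - intros p _ IH t Ht. apply (positivity_propagates (Z.succ p) 0 t); [lra |].
    right. intros xi Hxi. replace (Z.succ p - 1)%Z with p by lia.
    generalize (IH xi ltac:(lra)) (lattice_nonneg (Z.succ p + 1) xi ltac:(lra)). lra.
  - intros p _ IH t Ht. apply (positivity_propagates p 0 t); [lra |].
    right. intros xi Hxi. rewrite Z.add_1_r.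
    generalize (IH xi ltac:(lra)) (lattice_nonneg (p - 1) xi ltac:(lra)). lra.
Qed.

End CooperativeLattice.

Theorem lattice_comparison (w : Z -> R) (W : R) (u : Z -> R -> R) :
  (forall p, 0 < w p <= W) -> lattice_supersolution w u -> (forall p, 0 <= u p 0) ->
  (forall p t, 0 <= t -> 0 <= u p t) /\
  ((exists p, 0 < u p 0) -> forall p t, 0 < t -> 0 < u p t).
Proof.
  intros Hw [Hd [Hc [Hineq Hb]]] H0.
  assert (Hpos : forall p, 0 < w p) by (intros p; apply Hw).
  assert (Hle : forall p, w p <= W) by (intros p; apply Hw).
  split.
  - exact (lattice_nonneg w W u Hpos Hle Hd Hc Hineq Hb H0).
  - exact (lattice_pos w W u Hpos Hle Hd Hc Hineq Hb H0).
Qed.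

Definition interleave {X : Type} (a b : Z -> X) (p : Z) : X :=
  if Z.even p then b (Z.div2 p) else a (Z.div2 p).

Lemma interleave_even {X : Type} (a b : Z -> X) q : interleave a b (2 * q) = b q.
Proof.
  unfold interleave. rewrite Z.even_even. f_equal.
  pose proof (Z.div2_odd (2 * q)) as H. rewrite Z.odd_even in H. cbn [Z.b2z] in H. lia.
Qed.

Lemma interleave_odd {X : Type} (a b : Z -> X) q : interleave a b (2 * q + 1) = a q.
Proof.
  unfold interleave. rewrite Z.even_odd. f_equal.
  pose proof (Z.div2_odd (2 * q + 1)) as H. rewrite Z.odd_odd in H. cbn [Z.b2z] in H. lia.
Qed.

Lemma interleave_forall {X : Type} (P : X -> Prop) (a b : Z -> X) :
  (forall j, P (a j)) -> (forall j, P (b j)) -> forall p, P (interleave a b p).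
Proof. intros Ha Hb p. unfold interleave. now destruct (Z.even p). Qed.

Lemma interleave_cooperative_ineq (al be L t : R) (a b : Z -> R -> R) :
  0 <= al -> 0 <= be -> 0 <= L ->
  (forall j, Derive (a j) t >= - 2 * al * a j t + be * (b j t + b (j + 1)%Z t)) ->
  (forall j, Derive (b j) t >=
     - L * Rabs (b j t) + al * (a j t + a (j - 1)%Z t) - 2 * be * b j t) ->
  forall p, Derive (interleave a b p) t >=
    - (L + 2 * al + 2 * be) * Rabs (interleave a b p t)
    + interleave (fun _ => be) (fun _ => al) p
      * (interleave a b (p - 1)%Z t + interleave a b (p + 1)%Z t).
Proof.
  intros Hal Hbe HL Ha Hb p.
  destruct (Z.Even_or_Odd p) as [[q ->] | [q ->]].
  - replace (2 * q - 1)%Z with (2 * (q - 1) + 1)%Z by lia.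
    rewrite !interleave_even, !interleave_odd.
    assert (H := Hb q). assert (Habs := Rabs_pos (b q t)).
    assert (be * b q t <= be * Rabs (b q t)) by (apply Rmult_le_compat_l; [lra | apply Rle_abs]).
    assert (0 <= al * Rabs (b q t)) by (apply Rmult_le_pos; lra).
    lra.
  - replace (2 * q + 1 - 1)%Z with (2 * q)%Z by lia.
    replace (2 * q + 1 + 1)%Z with (2 * (q + 1))%Z by lia.
    rewrite !interleave_even, !interleave_odd.
    assert (H := Ha q). assert (Habs := Rabs_pos (a q t)).
    assert (al * a q t <= al * Rabs (a q t)) by (apply Rmult_le_compat_l; [lra | apply Rle_abs]).
    assert (0 <= (L + 2 * be) * Rabs (a q t)) by (apply Rmult_le_pos; lra).
    lra.
Qed.

Lemma C1_nonneg_ex_derive (g : R -> R) t : C1_nonneg g -> 0 < t -> ex_derive g t.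
Proof. intros [dg [Hd _]] Ht. exists (dg t). now apply Hd. Qed.

Lemma C1_nonneg_right_continuous (g : R -> R) :
  C1_nonneg g -> filterlim g (at_right 0) (locally (g 0)).
Proof. intros [dg [_ [Hr _]]]. exact (right_derivative_right_continuous g (dg 0) Hr). Qed.

Lemma locally_bounded_minus (Vl Pl Vu Pu : Z -> R -> R) :
  locally_bounded Vl Pl -> locally_bounded Vu Pu ->
  locally_bounded (fun j t => Vu j t - Vl j t) (fun j t => Pu j t - Pl j t).
Proof.
  intros Bl Bu T HT. destruct (Bl T HT) as [M1 HM1]. destruct (Bu T HT) as [M2 HM2].
  exists (M1 + M2). intros t j Ht.
  specialize (HM1 t j Ht). specialize (HM2 t j Ht).
  generalize (Rabs_triang (Vu j t) (- Vl j t)) (Rabs_triang (Pu j t) (- Pl j t)).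
  rewrite !Rabs_Ropp. unfold Rminus. lra.
Qed.

Lemma f_difference_lower_bound (f : R -> R) (Vl Pl Vu Pu : Z -> R -> R) :
  locally_lipschitz f -> locally_bounded Vl Pl -> locally_bounded Vu Pu ->
  forall T, 0 < T -> exists L, 0 <= L /\ forall j t, 0 <= t <= T ->
    f (Pu j t) - f (Pl j t) >= - L * Rabs (Pu j t - Pl j t).
Proof.
  intros Hlip Bl Bu T HT.
  destruct (Bl T HT) as [M1 HM1]. destruct (Bu T HT) as [M2 HM2].
  set (M := Rabs M1 + Rabs M2).
  destruct (locally_lipschitz_on_segment f (- M) M Hlip) as [L [HL Hl]].
  { unfold M. generalize (Rabs_pos M1) (Rabs_pos M2). lra. }
  exists L. split; [exact HL |]. intros j t Ht.
  specialize (HM1 t j Ht). specialize (HM2 t j Ht).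
  assert (Hf := Rabs_maj2 (f (Pu j t) - f (Pl j t))).
  enough (Rabs (f (Pu j t) - f (Pl j t)) <= L * Rabs (Pu j t - Pl j t)) by lra.
  generalize (Rle_abs M1) (Rle_abs M2) (Rabs_pos M1) (Rabs_pos M2)
    (Rabs_pos (Vl j t)) (Rabs_pos (Vu j t)); intros.
  apply Hl; apply Rabs_le_between; unfold M; lra.
Qed.

Lemma sub_super_difference_ineq (f : R -> R) (alpha beta : R) (Vl Pl Vu Pu : Z -> R -> R) :
  subsolution f alpha beta Vl Pl -> supersolution f alpha beta Vu Pu ->
  forall t j, 0 < t ->
    Derive (fun s => Vu j s - Vl j s) t >=
      - 2 * alpha * (Vu j t - Vl j t)
      + beta * ((Pu j t - Pl j t) + (Pu (j + 1)%Z t - Pl (j + 1)%Z t)) /\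
    Derive (fun s => Pu j s - Pl j s) t >=
      (f (Pu j t) - f (Pl j t))
      + alpha * ((Vu j t - Vl j t) + (Vu (j - 1)%Z t - Vl (j - 1)%Z t))
      - 2 * beta * (Pu j t - Pl j t).
Proof.
  intros [Csub Isub] [Csup Isup] t j Ht.
  destruct (Csub j) as [CVl CPl]. destruct (Csup j) as [CVu CPu].
  rewrite !Derive_minus by (apply C1_nonneg_ex_derive; assumption).
  destruct (Isub t j Ht). destruct (Isup t j Ht). split; lra.
Qed.

Lemma difference_lattice_supersolution (f : R -> R) (alpha beta : R) (Vl Pl Vu Pu : Z -> R -> R) :
  0 <= alpha -> 0 <= beta -> locally_lipschitz f ->
  subsolution f alpha beta Vl Pl -> supersolution f alpha beta Vu Pu ->
  locally_bounded Vl Pl -> locally_bounded Vu Pu ->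
  lattice_supersolution (interleave (fun _ => beta) (fun _ => alpha))
    (interleave (fun j t => Vu j t - Vl j t) (fun j t => Pu j t - Pl j t)).
Proof.
  intros Hal Hbe Hlip Hsub Hsup Bl Bu.
  assert (C1 : forall j, (C1_nonneg (Vl j) /\ C1_nonneg (Pl j)) /\
                         (C1_nonneg (Vu j) /\ C1_nonneg (Pu j))).
  { intros j. split; [apply Hsub | apply Hsup]. }
  split; [| split; [| split]].
  - intros p t Ht. revert p. apply (interleave_forall (fun g => ex_derive g t));
      intros j; destruct (C1 j) as [[] []];
      apply (ex_derive_minus (K := R_AbsRing) (V := R_NormedModule));
      now apply C1_nonneg_ex_derive.
  - apply (interleave_forall (fun g => filterlim g (at_right 0) (locally (g 0))));
      intros j; destruct (C1 j) as [[] []];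
      apply (filterlim_Rminus (at_right 0)); now apply C1_nonneg_right_continuous.
  - intros T HT.
    destruct (f_difference_lower_bound f Vl Pl Vu Pu Hlip Bl Bu T HT) as [L [HL HF]].
    exists (L + 2 * alpha + 2 * beta). split; [lra |]. intros p t Ht.
    apply interleave_cooperative_ineq; [lra | lra | lra | |]; intros j;
      destruct (sub_super_difference_ineq f alpha beta Vl Pl Vu Pu Hsub Hsup t j ltac:(lra));
      [| specialize (HF j t ltac:(lra))]; lra.
  - intros T HT. destruct (locally_bounded_minus Vl Pl Vu Pu Bl Bu T HT) as [M HM].
    exists M. intros p t Ht. revert p.
    apply (interleave_forall (fun g => Rabs (g t) <= M)); intros j;
      generalize (HM t j Ht) (Rabs_pos (Vu j t - Vl j t)) (Rabs_pos (Pu j t - Pl j t)); lra.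
Qed.

Theorem proposition6p2 (alpha beta : R) (f df : R -> R)
  (Vl Pl Vu Pu : Z -> R -> R) :
  0 < alpha -> 0 < beta -> admissible_f f df ->
  subsolution f alpha beta Vl Pl -> supersolution f alpha beta Vu Pu ->
  locally_bounded Vl Pl -> locally_bounded Vu Pu ->
  (forall j : Z, Vl j 0 <= Vu j 0 /\ Pl j 0 <= Pu j 0) ->
  (forall (t : R) (j : Z), 0 < t -> Vl j t <= Vu j t /\ Pl j t <= Pu j t) /\
  ((exists j : Z, Vl j 0 <> Vu j 0 \/ Pl j 0 <> Pu j 0) ->
   forall (t : R) (j : Z), 0 < t -> Vl j t < Vu j t /\ Pl j t < Pu j t).
Proof.
  intros Hal Hbe [_ [_ [_ [_ [Hlip _]]]]] Hsub Hsup Bl Bu Hinit.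
  set (u := interleave (fun j t => Vu j t - Vl j t) (fun j t => Pu j t - Pl j t)).
  destruct (lattice_comparison (interleave (fun _ => beta) (fun _ => alpha))
              (alpha + beta) u) as [Hnonneg Hpos].
  - apply (interleave_forall (fun w => 0 < w <= alpha + beta)); intros; lra.
  - apply (difference_lattice_supersolution f); auto; lra.
  - apply (interleave_forall (fun g => 0 <= g 0)); intros j; destruct (Hinit j); lra.
  - split.
    + intros t j Ht.
      generalize (Hnonneg (2 * j + 1)%Z t) (Hnonneg (2 * j)%Z t).
      unfold u. rewrite interleave_odd, interleave_even. intros Ha Hb.
      split; [generalize (Ha ltac:(lra)) | generalize (Hb ltac:(lra))]; lra.
    + intros [j0 Hj0] t j Ht.
      assert (Hstart : exists p, 0 < u p 0).
      { destruct (Hinit j0), Hj0; [exists (2 * j0 + 1)%Z | exists (2 * j0)%Z];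
          unfold u; rewrite ?interleave_odd, ?interleave_even; lra. }
      generalize (Hpos Hstart (2 * j + 1)%Z t Ht) (Hpos Hstart (2 * j)%Z t Ht).
      unfold u. rewrite interleave_odd, interleave_even. lra.
Qed.
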